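(* The fertility map $\Phi\colon\mathcal{A}T\to\mathcal{A}M_{-1}$ is a morphism of pre-Lie-Rinehart algebras: its restriction $\Phi\colon\mathcal A\to S(M_0)$ is a unital algebra morphism, and for all $X,Y\in\mathcal{A}T$ and $\mathbf a\in\mathcal A$ one has $\Phi(X\curvearrowright Y)=\Phi(X)\rhd\Phi(Y)$, $\Phi(\mathbf aX)=\Phi(\mathbf a)\odot\Phi(X)$, and $\Phi(\rho(X)\mathbf a)=\rho(\Phi(X))(\Phi(\mathbf a))$.
   Context: Fix a field $\mathbb K$ and a finite set $C$ of decorations. Trees side. An aromatic tree is a finite directed graph $(V,E)$ whose vertices carry decorations $d(v)\in C$, in which every vertex has exactly one outgoing edge except one vertex, the root, which has none; it is considered up to decoration-preserving isomorphism. The connected component of the root is a (rooted) tree; the other components are aromas (connected graphs in which every vertex has exactly one outgoing edge; each contains exactly one directed cycle). Let $T$ be the span of trees, $A_0$ the span of aromas, $\mathcal A=S(A_0)$ the symmetric algebra (multiaromas, product written by juxtaposition), and $\mathcal AT=\mathcal A\otimes T$ the span of aromatic trees $\mathbf a\tau$. The fertility $f(v)$ of a vertex is the number of edges ending at $v$. Grafting: for a tree $\tau_1$ and a tree or aroma $x$, $\tau_1\curvearrowright x$ is the sum over vertices $v$ of $x$ of the graph obtained by adding an edge from the root of $\tau_1$ to $v$; on multiaromas $\tau\curvearrowright(a^1\cdots a^m)=\sum_i a^1\cdots(\tau\curvearrowright a^i)\cdots a^m$; on aromatic trees $(\mathbf a_1\tau_1)\curvearrowright(\mathbf a_2\tau_2)=\mathbf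 a_1\mathbf a_2(\tau_1\curvearrowright\tau_2)+\mathbf a_1(\tau_1\curvearrowright\mathbf a_2)\tau_2$. The anchor is $\rho(\mathbf a_1\tau_1)(\mathbf a)=\mathbf a_1(\tau_1\curvearrowright\mathbf a)$. (With these, $\mathcal AT$ is a pre-Lie-Rinehart algebra over $\mathcal A$.) Multi-index side. $\overline N(C)$ is the polynomial algebra over $\mathbb K$ in variables $x^a_j$, $a\in C$, $j\ge -1$; monomials $x^{\mathbf k}=\prod(x^a_j)^{k^a_j}$ have weight $\sum j k^a_j$; $\partial$ is the derivation with $\partial x^a_j=x^a_{j+1}$; $M_n$ is the span of monomials of weight $n$ ($n=-1,0$; non-constant for $n=0$). $S(V)$ is the symmetric algebra with product $\odot$; $\mathcal AM_{-1}=S(M_0)\otimes M_{-1}$. The product $\rhd$: for monomials $x^{\mathbf k}\in M_{-1}$ and $P\in M_0\cup M_{-1}$, $x^{\mathbf k}\rhd P=x^{\mathbf k}\partial P$; $x^{\mathbf k}\rhd(x^{\kappa^1}\odot\cdots\odot x^{\kappa^m})=\sum_i x^{\kappa^1}\odot\cdots\odot(x^{\mathbf k}\rhd x^{\kappa^i})\odot\cdots\odot x^{\kappa^m}$; $(\mathbf y^1\odot x^{\mathbf k})\rhd\mathbf y=\mathbf y^1\odot(x^{\mathbf k}\rhd\mathbf y)$; $(\mathbf y^1\odot x^{\mathbf k^1})\rhd(\mathbf y^2\odot x^{\mathbf k^2})=\mathbf y^1\odot(x^{\mathbf k^1}\rhd\mathbf y^2)\odot x^{\mathbf k^2}+\mathbf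 y^1\odot\mathbf y^2\odot(x^{\mathbf k^1}\rhd x^{\mathbf k^2})$. The anchor is $\rho(X)(\mathbf y)=X\rhd\mathbf y$. Fertility map: for a tree $t$, $\Phi(t)=\prod_{v}x^{d(v)}_{f(v)-1}\in M_{-1}$; for an aroma $a$, $\Phi(a)=\prod_v x^{d(v)}_{f(v)-1}\in M_0$; $\Phi(a^1\cdots a^nt)=\Phi(a^1)\odot\cdots\odot\Phi(a^n)\odot\Phi(t)$, extended linearly. *)

From HB Require Import structures.
From mathcomp Require Import all_boot all_algebra.
From mathcomp Require Import finmap.
From mathcomp Require Import generic_quotient.
From mathcomp.multinomials Require Import monalg.

Set Implicit Arguments.
Unset Strict Implicit.
Unset Printing Implicit Defensive.

Import GRing.Theory.
Local Open Scope ring_scope.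
Local Open Scope quotient_scope.

Section LinExt.
Variable K : fieldType.

Definition linext (T : choiceType) (V : lmodType K) (f : T -> V)
    (x : {malg K[T]}) : V :=
  \sum_(k <- msupp x) x@_k *: f k.

Definition linext2 (T U : choiceType) (V : lmodType K) (f : T -> U -> V)
    (x : {malg K[T]}) (y : {malg K[U]}) : V :=
  \sum_(k <- msupp x) \sum_(l <- msupp y) (x@_k * y@_l) *: f k l.
End LinExt.

(* Decorated graphs: vertex set 'I_n, each vertex has at most one   *)
(* outgoing edge (its successor), and a decoration in C.            *)
Section Graphs.
Variable C : finType.

Definition dgraph := {n : nat & {ffun 'I_n -> option 'I_n * C}}.

Definition gsucc (g : dgraph) (v : 'I_(tag g)) : option 'I_(tag g) :=
  (tagged g v).1.
Definition gdeco (g : dgraph) (v : 'I_(tag g)) : C := (tagged g v).2.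
Arguments gsucc : clear implicits.
Arguments gdeco : clear implicits.

Definition giso (g h : dgraph) : bool :=
  [exists f : {ffun 'I_(tag g) -> 'I_(tag h)},
    [&& injectiveb f, tag g == tag h &
      [forall i, tagged h (f i) == (omap f (tagged g i).1, (tagged g i).2)]]].

Lemma giso_refl : reflexive giso.
Proof.
move=> g; apply/existsP; exists [ffun i => i]; apply/and3P; split=> //.
  by apply/injectiveP=> i j; rewrite !ffunE.
apply/forallP=> i; rewrite ffunE; case: (tagged g i) => [[s|] c] //=.
by rewrite ffunE.
Qed.

Lemma giso_trans : transitive giso.
Proof.
move=> h g k /existsP[f1 /and3P[/injectiveP i1 /eqP e1 /forallP h1]].
move=> /existsP[f2 /and3P[/injectiveP i2 /eqP e2 /forallP h2]].
apply/existsP; exists [ffun i => f2 (f1 i)]; apply/and3P; split.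
- by apply/injectiveP=> i j; rewrite !ffunE => /i2 /i1.
- by rewrite -e2 e1.
apply/forallP=> i; rewrite ffunE (eqP (h2 _)) (eqP (h1 _)) /=.
by case: (tagged g i) => [[s|] c] //=; rewrite ffunE.
Qed.

Lemma giso_sym : symmetric giso.
Proof.
suff S g h : giso g h -> giso h g by move=> g h; apply/idP/idP; apply: S.
move=> /existsP[f /and3P[/injectiveP fi /eqP e /forallP hf]].
have cf : (#|'I_(tag h)| <= #|'I_(tag g)|)%N by rewrite !card_ord e.
have [f' fK f'K] := inj_card_bij fi cf.
apply/existsP; exists [ffun j => f' j]; apply/and3P; split.
- by apply/injectiveP=> i j; rewrite !ffunE => /(can_inj f'K).
- by rewrite e.
apply/forallP=> j; rewrite ffunE.
have := eqP (hf (f' j)); rewrite f'K => ->.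
case: (tagged g (f' j)) => [[s|] c] //=.
by rewrite ffunE fK.
Qed.

Canonical giso_equiv := EquivRel giso giso_refl giso_sym giso_trans.

Definition graphc := {eq_quot giso}.

Definition fert (g : dgraph) (v : 'I_(tag g)) : nat :=
  #|[pred u | gsucc g u == Some v]|.
Arguments fert : clear implicits.

Definition gadj (g : dgraph) : rel 'I_(tag g) :=
  fun u v => (gsucc g u == Some v) || (gsucc g v == Some u).

Definition gconnected (g : dgraph) : bool :=
  [forall u, forall v, connect (@gadj g) u v].

Definition istree (g : dgraph) : bool :=
  (#|[pred v | gsucc g v == None]| == 1%N) && gconnected g.

Definition isaroma (g : dgraph) : bool :=
  [&& (0 < tag g)%N, [forall v, gsucc g v != None] & gconnected g].

(* grafting: edge from the root of t to the vertex v of x;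
   vertices of t come first, then those of x *)
Definition graft_at (t x : dgraph) (v : 'I_(tag x)) : dgraph :=
  existT _ (tag t + tag x)%N
    [ffun k : 'I_(tag t + tag x) =>
       match split k with
       | inl i => (Some (if gsucc t i is Some j then lshift (tag x) j
                         else @rshift (tag t) (tag x) v), gdeco t i)
       | inr j => (omap (@rshift (tag t) (tag x)) (gsucc x j), gdeco x j)
       end].

End Graphs.
Arguments gsucc {C} g v.
Arguments gdeco {C} g v.
Arguments fert {C} g v.

Section Classes.
Variable C : finType.

Definition Tree := {x : graphc C | istree (repr x)}.
Definition Aroma := {x : graphc C | isaroma (repr x)}.

Variable K : fieldType.

Definition tree_cls (g : dgraph C) : {malg K[Tree]} :=
  if insub (\pi_(graphc C) g) is Some t then << t >> else 0.
Definition aroma_cls (g : dgraph C) : {malg K[Aroma]} :=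
  if insub (\pi_(graphc C) g) is Some a then << a >> else 0.

Definition graft_tt (t1 t2 : Tree) : {malg K[Tree]} :=
  \sum_(v : 'I_(tag (repr (val t2)))) tree_cls (graft_at (repr (val t1)) v).
Definition graft_ta (t : Tree) (a : Aroma) : {malg K[Aroma]} :=
  \sum_(v : 'I_(tag (repr (val a)))) aroma_cls (graft_at (repr (val t)) v).

(* multiaromas A = S(A_0), aromatic trees AT = A (x) T *)
Definition MA := {malg K[{cmonom Aroma}]}.
Definition AT := {malg K[({cmonom Aroma} * Tree)%type]}.

Definition at_of (a : MA) (t : {malg K[Tree]}) : AT :=
  linext2 (fun m tau => << (m, tau) >> : AT) a t.

Definition actA (a : MA) (X : AT) : AT :=
  linext2 (fun m1 (p : {cmonom Aroma} * Tree) =>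
             << (mulcm m1 p.1, p.2) >> : AT) a X.

(* tau ~> (a^1 ... a^m) = sum_i a^1 ... (tau ~> a^i) ... a^m *)
Definition liftA (x : {malg K[Aroma]}) : MA :=
  linext (fun al => << ucm al >> : MA) x.
Definition graft_tA (t : Tree) (a : MA) : MA :=
  linext (fun m : {cmonom Aroma} =>
     \sum_(al <- finsupp m) (m al)%:R *:
        (<< divcm m (ucm al) >> * liftA (graft_ta t al))) a.

Definition graftAT (X Y : AT) : AT :=
  linext2 (fun (p1 p2 : {cmonom Aroma} * Tree) =>
    at_of << mulcm p1.1 p2.1 >> (graft_tt p1.2 p2.2)
    + at_of (<< p1.1 >> * graft_tA p1.2 << p2.1 >>) << p2.2 >>) X Y.

Definition anchorAT (X : AT) (a : MA) : MA :=
  linext2 (fun (p : {cmonom Aroma} * Tree) (m : {cmonom Aroma}) =>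
    << p.1 >> * graft_tA p.2 << m >>) X a.

End Classes.

Section MultiIndex.
Variable C : finType.
Variable K : fieldType.

(* monomials of N(C): the variable x^a_j (a in C, j >= -1) is encoded as
   ucm (a, j+1) *)
Definition Mon := {cmonom (C * nat)%type}.
Definition Npoly := {malg K[Mon]}.

Definition dmon (m : Mon) : Npoly :=
  \sum_(i <- finsupp m) (m i)%:R *:
     << mulcm (divcm m (ucm i)) (ucm (i.1, i.2.+1)) >>.
Definition deriv (P : Npoly) : Npoly := linext dmon P.

(* the symmetric algebra S(V) on the span V of monomials, product (.) *)
Definition SM := {malg K[{cmonom Mon}]}.
Definition emb1 (P : Npoly) : SM := linext (fun m : Mon => << ucm m >> : SM) P.

Definition dS (k : Mon) (y : SM) : SM :=
  linext (fun mu : {cmonom Mon} =>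
    \sum_(p <- finsupp mu) (mu p)%:R *:
       (<< divcm mu (ucm p) >> * emb1 (<< k >> * deriv << p >>))) y.

Definition AM := {malg K[({cmonom Mon} * Mon)%type]}.

Definition am_of (y : SM) (P : Npoly) : AM :=
  linext2 (fun (mu : {cmonom Mon}) (k : Mon) => << (mu, k) >> : AM) y P.

Definition actAM (y : SM) (Z : AM) : AM :=
  linext2 (fun (mu : {cmonom Mon}) (p : {cmonom Mon} * Mon) =>
             << (mulcm mu p.1, p.2) >> : AM) y Z.

Definition rhdAM (Z1 Z2 : AM) : AM :=
  linext2 (fun (p1 p2 : {cmonom Mon} * Mon) =>
     am_of (<< p1.1 >> * dS p1.2 << p2.1 >>) << p2.2 >>
     + am_of << mulcm p1.1 p2.1 >> (<< p1.2 >> * deriv << p2.2 >>)) Z1 Z2.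

Definition anchorAM (Z : AM) (y : SM) : SM :=
  linext2 (fun (p : {cmonom Mon} * Mon) (mu : {cmonom Mon}) =>
     << p.1 >> * dS p.2 << mu >>) Z y.

Definition fmon (g : dgraph C) : Mon :=
  \big[@mulcm _/@onecm _]_(v : 'I_(tag g)) ucm (gdeco g v, fert g v).

Definition PhiTree (t : Tree C) : Mon := fmon (repr (val t)).
Definition PhiAroma (a : Aroma C) : Mon := fmon (repr (val a)).

Definition PhiA (a : MA C K) : SM :=
  linext (fun m : {cmonom Aroma C} =>
    \prod_(al <- finsupp m) << ucm (PhiAroma al) >> ^+ (m al)) a.

Definition PhiAT (X : AT C K) : AM :=
  linext (fun p : {cmonom Aroma C} * Tree C =>
    am_of (PhiA << p.1 >>) << PhiTree p.2 >>) X.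

End MultiIndex.

From Pilot Require Import Defs.
From HB Require Import structures.
From mathcomp Require Import all_boot all_algebra.
From mathcomp Require Import finmap generic_quotient.
From mathcomp.multinomials Require Import monalg.

(* The fertility map sends a graph to the product, over its vertices v, of the
   variables x^{d(v)}_{f(v)-1}.  Grafting a tree t onto a vertex v of x raises
   f(v) by one and leaves all other fertilities unchanged, so summing over v
   gives Phi(t ~> x) = Phi(t) dPhi(x): grafting becomes the derivation d.  On
   multiaromas Phi is induced by a morphism of free commutative monoids, hence
   is an algebra morphism, and grafting onto a product of aromas obeys the same
   Leibniz rule as |> on S(M_0).  The remaining identities are bilinear, so it
   suffices to check them on pairs of basis elements, where they reduce to
   these two facts. *)

Set Implicit Arguments.
Unset Strict Implicit.
Unset Printing Implicit Defensive.

Import GRing.Theory.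
Local Open Scope ring_scope.
Local Open Scope quotient_scope.

Local Notation bilinear f := (bilinear_for *:%R *:%R f).

Section LinearExtension.
Variable K : fieldType.

Section LinearMaps.
Variables (U V : lmodType K).
Implicit Types (phi : U -> V).

Lemma linear_map0 phi : linear phi -> phi 0 = 0.
Proof. by move=> L; have := L (-1) 0 0; rewrite scaler0 addr0 scaleN1r addNr. Qed.

Lemma linear_mapD phi : linear phi -> {morph phi : x y / x + y}.
Proof. by move=> L x y; have := L 1 x y; rewrite !scale1r. Qed.

Lemma linear_mapZ phi c : linear phi -> {morph phi : x / c *: x}.
Proof. by move=> L x; rewrite -[c *: x]addr0 L linear_map0 // addr0. Qed.

Lemma linear_map_sum phi (I : Type) (r : seq I) (P : pred I) (F : I -> U) :
  linear phi -> phi (\sum_(i <- r | P i) F i) = \sum_(i <- r | P i) phi (F i).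
Proof. by move=> L; rewrite (big_morph phi (linear_mapD L) (linear_map0 L)). Qed.

End LinearMaps.

Lemma linear_comp (U V W : lmodType K) (g : V -> W) (f : U -> V) :
  linear g -> linear f -> linear (fun x => g (f x)).
Proof. by move=> Lg Lf c x y; rewrite Lf Lg. Qed.

Section Linext.
Variables (T : choiceType) (V : lmodType K).
Implicit Types (phi psi : {malg K[T]} -> V) (f : T -> V).

Lemma malgE_scale (x : {malg K[T]}) : x = \sum_(k <- msupp x) x@_k *: << k >>.
Proof.
rewrite {1}[x]monalgE; apply: eq_bigr => k _.
by apply/malgP => l; rewrite mcoeffZ !mcoeffU mulr_natr.
Qed.

Lemma linextU f k : linext f << k >> = f k.
Proof. by rewrite /linext msuppU oner_eq0 big_seq_fset1 mcoeffUU scale1r. Qed.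

Lemma linear_linext f : linear (linext f).
Proof.
move=> c x y; rewrite /linext.
have sum_over (z : {malg K[T]}) (d : {fset T}) : (msupp z `<=` d)%fset ->
    \sum_(k <- msupp z) z@_k *: f k = \sum_(k <- d) z@_k *: f k.
  by move=> le; apply: big_fset_incl => // k _ /mcoeff_outdom ->; rewrite scale0r.
set d := (msupp x `|` msupp y)%fset.
have le_d : (msupp (c *: x + y) `<=` d)%fset.
  exact: fsubset_trans (msuppD_le _ _) (fsetSU _ (msuppZ_le _ _)).
rewrite (sum_over _ _ le_d) (sum_over x d (fsubsetUl _ _)) (sum_over y d (fsubsetUr _ _)).
rewrite scaler_sumr -big_split /=; apply: eq_bigr => k _.
by rewrite mcoeffD mcoeffZ scalerDl scalerA.
Qed.

Lemma malg_linear_ext phi psi : linear phi -> linear psi ->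
  (forall k, phi << k >> = psi << k >>) -> phi =1 psi.
Proof.
move=> Lphi Lpsi E x; rewrite [x]malgE_scale !linear_map_sum //.
by apply: eq_bigr => k _; rewrite !linear_mapZ // E.
Qed.

End Linext.

Section Bilinear.
Variables (T U : choiceType) (V : lmodType K).
Implicit Types (phi psi : {malg K[T]} -> {malg K[U]} -> V).

Lemma linext2E (f : T -> U -> V) x y :
  linext2 f x y = linext (fun k => linext (f k) y) x.
Proof.
apply: eq_bigr => k _; rewrite scaler_sumr.
by apply: eq_bigr => l _; rewrite scalerA.
Qed.

Lemma linext2U (f : T -> U -> V) k l : linext2 f << k >> << l >> = f k l.
Proof. by rewrite linext2E !linextU. Qed.

Lemma linext2E_swap (f : T -> U -> V) x y :
  linext2 f x y = linext (fun l => linext (f^~ l) x) y.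
Proof.
rewrite linext2E /linext; under eq_bigr do rewrite scaler_sumr.
rewrite exchange_big /=; apply: eq_bigr => l _; rewrite scaler_sumr.
by apply: eq_bigr => k _; rewrite !scalerA mulrC.
Qed.

Lemma bilinear_linext2 (f : T -> U -> V) : bilinear (linext2 f).
Proof.
split=> [y | x] c u v; first by rewrite !linext2E linear_linext.
by rewrite !linext2E_swap linear_linext.
Qed.

Lemma malg_bilinear_ext phi psi : bilinear phi -> bilinear psi ->
  (forall k l, phi << k >> << l >> = psi << k >> << l >>) -> forall x y, phi x y = psi x y.
Proof.
move=> [Lphi Rphi] [Lpsi Rpsi] E x y.
apply: (malg_linear_ext (Lphi y) (Lpsi y)) => k.
exact: (malg_linear_ext (Rphi _) (Rpsi _)).
Qed.

End Bilinear.

Lemma bilinear_comp_linear (T U : choiceType) (V W : lmodType K) (g : V -> W)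
    (phi : {malg K[T]} -> {malg K[U]} -> V) :
  linear g -> bilinear phi -> bilinear (fun x y => g (phi x y)).
Proof. by move=> Lg [Lphi Rphi]; split=> [y | x]; apply: linear_comp. Qed.

Lemma linear_comp_bilinear (T U T' U' : choiceType) (V : lmodType K)
    (phi : {malg K[T]} -> {malg K[U]} -> V)
    (f : {malg K[T']} -> {malg K[T]}) (h : {malg K[U']} -> {malg K[U]}) :
  bilinear phi -> linear f -> linear h -> bilinear (fun x y => phi (f x) (h y)).
Proof.
move=> [Lphi Rphi] Lf Lh; split=> [y | x].
  exact: (linear_comp (Lphi (h y)) Lf).
exact: (linear_comp (Rphi (f x)) Lh).
Qed.

Lemma bilinear_mul (A : algType K) : bilinear (@GRing.mul A).
Proof.
split=> [b | a] c x y; first by rewrite mulrDl -scalerAl.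
by rewrite mulrDr -scalerAr.
Qed.

End LinearExtension.

(* monalg only declares the monoid law on [mmul]; [fmon] iterates [mulcm]. *)
HB.instance Definition _ (I : choiceType) :=
  Monoid.isComLaw.Build (cmonom I) (@onecm I) (@mulcm I)
    (@mulcmA I) (@mulcmC I) (@mul0cm I).

Section CmonomOfSeq.
Variable I : choiceType.
Implicit Types (s : seq I) (m : {cmonom I}).

Definition cmseq s : {cmonom I} := \big[@mulcm I/@onecm I]_(x <- s) ucm x.

Lemma cmseqE s a : cmseq s a = count_mem a s.
Proof.
elim: s => [|x s IH]; first by rewrite /cmseq big_nil onecmE.
by rewrite /cmseq big_cons mulcmE ucmE -/(cmseq s) IH.
Qed.

Lemma cmseq_nil : cmseq [::] = @onecm I.
Proof. exact: big_nil. Qed.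

Lemma cmseq1 x : cmseq [:: x] = ucm x.
Proof. exact: big_seq1. Qed.

Lemma cmseq_cons x s : cmseq (x :: s) = mulcm (ucm x) (cmseq s).
Proof. exact: big_cons. Qed.

Lemma cmseq_cat s1 s2 : cmseq (s1 ++ s2) = mulcm (cmseq s1) (cmseq s2).
Proof. exact: big_cat. Qed.

Lemma perm_cmseq s1 s2 : perm_eq s1 s2 -> cmseq s1 = cmseq s2.
Proof. exact: perm_big. Qed.

Lemma cmseq_surj m : exists s, m = cmseq s.
Proof.
exists (flatten [seq nseq (m b) b | b <- finsupp m]).
apply/eqP/cmP => a; rewrite cmseqE count_flatten sumnE !big_map.
under eq_bigr => b _ do rewrite count_nseq /=.
have [a_supp|a_nsupp] := boolP (a \in finsupp m).
  rewrite (bigD1_seq a) //= ?fset_uniq // eqxx mul1n big1 ?addn0 //.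
  by move=> b /negbTE; rewrite eq_sym => ->.
rewrite big1_seq; first by move: a_nsupp; rewrite -cmE_neq0 negbK => /eqP.
by move=> b /andP[_ b_supp]; case: eqP => // ab; move: a_nsupp; rewrite -ab b_supp.
Qed.

Lemma divcm_mulcmU x m : divcm (mulcm (ucm x) m) (ucm x) = m.
Proof. by apply/eqP/cmP => a; rewrite divcmE mulcmE addKn. Qed.

Lemma cmseq_rem x s : x \in s -> cmseq s = mulcm (ucm x) (cmseq (rem x s)).
Proof. by move=> xs; rewrite (perm_cmseq (perm_to_rem xs)) cmseq_cons. Qed.

Lemma divcm_cmseq x s : x \in s -> divcm (cmseq s) (ucm x) = cmseq (rem x s).
Proof. by move=> xs; rewrite (cmseq_rem xs) divcm_mulcmU. Qed.

Lemma cmseq_rem_map (J : choiceType) (f : J -> I) x (r : seq J) : x \in r ->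
  cmseq (rem (f x) (map f r)) = cmseq (map f (rem x r)).
Proof.
move=> xr; rewrite -(divcm_cmseq (map_f f xr)).
by rewrite (perm_cmseq (perm_map f (perm_to_rem xr))) /= cmseq_cons divcm_mulcmU.
Qed.

Lemma perm_finsupp_cmseq s : perm_eq (finsupp (cmseq s)) (undup s).
Proof.
apply: uniq_perm; rewrite ?fset_uniq ?undup_uniq // => a.
by rewrite mem_undup -cmE_neq0 cmseqE -lt0n -has_count has_pred1.
Qed.

Lemma big_cmseq (R : Type) (idx : R) (op : Monoid.com_law idx) (F : I -> R) s :
  \big[op/idx]_(a <- finsupp (cmseq s)) iterop (cmseq s a) op (F a) idx
  = \big[op/idx]_(x <- s) F x.
Proof.
rewrite -[RHS]big_undup_iterop_count (perm_big _ (perm_finsupp_cmseq s)).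
by apply: eq_bigr => a _; rewrite cmseqE.
Qed.

(* The common shape of [dmon], [dS] and [graft_tA]: a monomial differentiated
   one letter at a time. *)
Lemma sum_divcm_cmseq (V : zmodType) (F : {cmonom I} -> I -> V) s :
  \sum_(a <- finsupp (cmseq s)) F (divcm (cmseq s) (ucm a)) a *+ cmseq s a
  = \sum_(x <- s) F (cmseq (rem x s)) x.
Proof.
have := @big_cmseq V 0 +%R (fun a => F (divcm (cmseq s) (ucm a)) a) s.
under eq_bigr do rewrite Monoid.iteropE iter_addr_0.
move=> ->; rewrite big_seq [RHS]big_seq.
by apply: eq_bigr => x xs; rewrite divcm_cmseq.
Qed.
End CmonomOfSeq.

Section CmonomMap.
Variables I J : choiceType.

Definition cmmap (f : I -> J) (m : {cmonom I}) : {cmonom J} :=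
  \big[@mulcm J/@onecm J]_(a <- finsupp m) iterop (m a) (@mulcm J) (ucm (f a)) (@onecm J).

Lemma cmmap_cmseq (f : I -> J) (s : seq I) : cmmap f (cmseq s) = cmseq (map f s).
Proof. by rewrite /cmmap big_cmseq /cmseq big_map. Qed.

Lemma cmmap_onecm (f : I -> J) : cmmap f (@onecm I) = @onecm J.
Proof. by rewrite -(cmseq_nil I) cmmap_cmseq cmseq_nil. Qed.

Lemma cmmap_mulcm (f : I -> J) (m1 m2 : {cmonom I}) :
  cmmap f (mulcm m1 m2) = mulcm (cmmap f m1) (cmmap f m2).
Proof.
have [s1 ->] := cmseq_surj m1; have [s2 ->] := cmseq_surj m2.
by rewrite -cmseq_cat !cmmap_cmseq map_cat cmseq_cat.
Qed.

Lemma cmmap_ucm (f : I -> J) (a : I) : cmmap f (ucm a) = ucm (f a).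
Proof. by rewrite -cmseq1 cmmap_cmseq cmseq1. Qed.

End CmonomMap.

Lemma homo_connect (T T' : finType) (e : rel T) (e' : rel T') (h : T -> T') :
  {homo h : x y / e x y >-> e' x y} -> {homo h : x y / connect e x y >-> connect e' x y}.
Proof.
move=> eh x y /connectP[p e_p ->]; elim: p x e_p => [|z p IHp] x /=.
  by move=> _; apply: connect0.
by case/andP=> exz /IHp; apply: connect_trans (connect1 (eh _ _ exz)).
Qed.

Lemma eq_Some (T : eqType) (a b : T) : (Some a == Some b) = (a == b).
Proof. by []. Qed.

Lemma card_ord_split n m (P : pred 'I_(n + m)) :
  #|[pred k | P k]| = (#|[pred i | P (lshift m i)]| + #|[pred j | P (rshift n j)]|)%N.
Proof. by rewrite -!sum1_card big_split_ord. Qed.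

Section Grafting.
Variable C : finType.
Implicit Types (g t x : dgraph C).

Definition nroots g := #|[pred u | gsucc g u == None]|.

Lemma gadj_sym g : symmetric (@gadj _ g).
Proof. by move=> a b; rewrite /gadj orbC. Qed.

Variables (t x : dgraph C) (v : 'I_(tag x)).
Local Notation G := (graft_at t v).
Local Notation n := (tag t).
Local Notation m := (tag x).

Lemma gsucc_graftl (i : 'I_n) : gsucc G (lshift m i) =
  Some (if gsucc t i is Some j then lshift m j else rshift n v).
Proof. by rewrite /gsucc /= ffunE (unsplitK (inl i)). Qed.

Lemma gsucc_graftr (j : 'I_m) : gsucc G (rshift n j) = omap (@rshift n m) (gsucc x j).
Proof. by rewrite /gsucc /= ffunE (unsplitK (inr j)). Qed.

Lemma gdeco_graftl (i : 'I_n) : gdeco G (lshift m i) = gdeco t i.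
Proof. by rewrite /gdeco /= ffunE (unsplitK (inl i)). Qed.

Lemma gdeco_graftr (j : 'I_m) : gdeco G (rshift n j) = gdeco x j.
Proof. by rewrite /gdeco /= ffunE (unsplitK (inr j)). Qed.

Lemma fert_graftl (i : 'I_n) : fert G (lshift m i) = fert t i.
Proof.
rewrite /fert card_ord_split.
have -> : #|[pred j | gsucc G (rshift n j) == Some (lshift m i)]| = 0%N.
  apply: eq_card0 => j; rewrite !inE gsucc_graftr.
  by case: (gsucc x j) => //= a; rewrite eq_Some eq_rlshift.
rewrite addn0; apply: eq_card => u; rewrite !inE gsucc_graftl.
by case: (gsucc t u) => [a|] /=; rewrite eq_Some ?eq_lshift ?eq_rlshift.
Qed.

Lemma fert_graftr (j : 'I_m) : fert G (rshift n j) = ((v == j) * nroots t + fert x j)%N.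
Proof.
rewrite /fert card_ord_split /nroots; congr (_ + _)%N.
  have [<-|ne] := eqVneq v j; rewrite ?mul1n ?mul0n.
    apply: eq_card => u; rewrite !inE gsucc_graftl.
    by case: (gsucc t u) => [a|] /=; rewrite eq_Some ?eq_lrshift ?eqxx.
  apply: eq_card0 => u; rewrite !inE gsucc_graftl.
  by case: (gsucc t u) => [a|] /=; rewrite eq_Some ?eq_lrshift // eq_rshift (negbTE ne).
apply: eq_card => u; rewrite !inE gsucc_graftr.
by case: (gsucc x u) => [a|] //=; rewrite !eq_Some eq_rshift.
Qed.

Lemma nroots_graft : nroots G = nroots x.
Proof.
rewrite /nroots card_ord_split.
have -> : #|[pred i | gsucc G (lshift m i) == None]| = 0%N.
  by apply: eq_card0 => i; rewrite !inE gsucc_graftl.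
by rewrite add0n; apply: eq_card => j; rewrite !inE gsucc_graftr; case: (gsucc x j).
Qed.

Lemma gconnected_graft : nroots t = 1%N -> gconnected t -> gconnected x -> gconnected G.
Proof.
move=> root_t /forallP con_t /forallP con_x.
have [r] : exists r, gsucc t r == None.
  by apply/card_gt0P; rewrite -/(nroots t) root_t.
move=> /eqP r_root.
have to_v k : connect (@gadj _ G) k (rshift n v).
  case: (split_ordP k) => [i|j] ->.
    have adjl a b : @gadj _ t a b -> @gadj _ G (lshift m a) (lshift m b).
      by rewrite /gadj !gsucc_graftl => /orP[] /eqP ->; rewrite eqxx ?orbT.
    apply: connect_trans (homo_connect adjl (forallP (con_t i) r)) (connect1 _).
    by rewrite /gadj gsucc_graftl r_root eqxx.
  have adjr a b : @gadj _ x a b -> @gadj _ G (rshift n a) (rshift n b).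
    by rewrite /gadj !gsucc_graftr => /orP[] /eqP ->; rewrite eqxx ?orbT.
  exact: homo_connect adjr _ _ (forallP (con_x j) v).
apply/forallP => a; apply/forallP => b; apply: connect_trans (to_v a) _.
by rewrite (sym_connect_sym (@gadj_sym G)) to_v.
Qed.

End Grafting.

Section GraftingClasses.
Variable C : finType.
Implicit Types (g t x : dgraph C).

Lemma nroots_tree g : istree g -> nroots g = 1%N.
Proof. by case/andP => /eqP. Qed.

Lemma istree_graft t x (v : 'I_(tag x)) : istree t -> istree x -> istree (graft_at t v).
Proof.
case/andP => /eqP root_t con_t /andP[/eqP root_x con_x]; apply/andP; split.
  by move: (nroots_graft t v); rewrite /nroots root_x => ->.
exact: gconnected_graft.
Qed.

Lemma isaroma_graft t x (v : 'I_(tag x)) : istree t -> isaroma x -> isaroma (graft_at t v).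
Proof.
case/andP => /eqP root_t con_t /and3P[x_gt0 /forallP succ_x con_x]; apply/and3P; split.
- by rewrite /= (leq_trans x_gt0) // leq_addl.
- apply/forallP => k; case: (split_ordP k) => [i|j] ->; first by rewrite gsucc_graftl.
  by rewrite gsucc_graftr; move: (succ_x j); case: (gsucc x j).
- exact: gconnected_graft.
Qed.

End GraftingClasses.

Lemma card_bij (T T' : finType) (f : T -> T') (P : pred T') : bijective f ->
  #|[pred u | P u]| = #|[pred u | P (f u)]|.
Proof. by move=> f_bij; rewrite -!sum1_card (reindex f) //; apply: onW_bij. Qed.

Section Isomorphism.
Variable C : finType.
Implicit Types (g h : dgraph C).

Section Invariance.
Variables (g h : dgraph C) (f : 'I_(tag g) -> 'I_(tag h)).
Hypotheses (f_bij : bijective f)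
  (f_succ : forall i, gsucc h (f i) = omap f (gsucc g i))
  (f_deco : forall i, gdeco h (f i) = gdeco g i).

Let f_inj : injective f := bij_inj f_bij.

Lemma omap_eq_Some (o : option 'I_(tag g)) i : (omap f o == Some (f i)) = (o == Some i).
Proof. by case: o => [j|] //=; rewrite !eq_Some (inj_eq f_inj). Qed.

Lemma fert_iso i : fert h (f i) = fert g i.
Proof.
rewrite /fert (card_bij _ f_bij); apply: eq_card => u.
by rewrite !inE f_succ omap_eq_Some.
Qed.

Lemma fmon_iso : fmon h = fmon g.
Proof.
rewrite /fmon (reindex f) /=; last exact: onW_bij.
by apply: eq_bigr => i _; rewrite f_deco fert_iso.
Qed.

Lemma nroots_iso : nroots h = nroots g.
Proof.
rewrite /nroots (card_bij _ f_bij); apply: eq_card => u.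
by rewrite !inE f_succ; case: (gsucc g u).
Qed.

Lemma gconnected_iso : gconnected g -> gconnected h.
Proof.
have [f' fK f'K] := f_bij.
have adj_f a b : gadj a b -> @gadj _ h (f a) (f b).
  by rewrite /gadj !f_succ !omap_eq_Some.
move=> /forallP con_g; apply/forallP => a; apply/forallP => b.
rewrite -(f'K a) -(f'K b); exact: homo_connect adj_f _ _ (forallP (con_g _) _).
Qed.

Lemma isaroma_iso : isaroma g -> isaroma h.
Proof.
have [f' fK f'K] := f_bij.
case/and3P => g_gt0 /forallP succ_g con_g; apply/and3P; split.
- exact: leq_ltn_trans (leq0n _) (ltn_ord (f (Ordinal g_gt0))).
- apply/forallP => a; rewrite -(f'K a) f_succ.
  by move: (succ_g (f' a)); case: (gsucc g (f' a)).
- exact: gconnected_iso.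
Qed.

Lemma istree_iso : istree g -> istree h.
Proof.
case/andP => root_g con_g; apply/andP; split; last exact: gconnected_iso.
by rewrite -/(nroots h) nroots_iso.
Qed.

End Invariance.

Lemma gisoP g h : giso g h -> exists f : 'I_(tag g) -> 'I_(tag h),
  [/\ bijective f, forall i, gsucc h (f i) = omap f (gsucc g i)
    & forall i, gdeco h (f i) = gdeco g i].
Proof.
move=> /existsP[f /and3P[/injectiveP f_inj /eqP tag_gh /forallP f_hom]].
exists f; split=> [|i|i]; last 2 first.
- by rewrite /gsucc (eqP (f_hom i)).
- by rewrite /gdeco (eqP (f_hom i)).
by apply: inj_card_bij f_inj _; rewrite !card_ord tag_gh.
Qed.

Lemma giso_repr g : giso g (repr (\pi_(graphc C) g)).
Proof. by rewrite giso_sym -(eqquotE (graphc C)) reprK. Qed.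

Lemma fmon_repr g : fmon (repr (\pi_(graphc C) g)) = fmon g.
Proof. by have [f [f_bij f_succ f_deco]] := gisoP (giso_repr g); apply: fmon_iso f_deco. Qed.

Lemma istree_repr g : istree g -> istree (repr (\pi_(graphc C) g)).
Proof. by have [f [f_bij f_succ _]] := gisoP (giso_repr g); apply: istree_iso f_succ. Qed.

Lemma isaroma_repr g : isaroma g -> isaroma (repr (\pi_(graphc C) g)).
Proof. by have [f [f_bij f_succ _]] := gisoP (giso_repr g); apply: isaroma_iso f_succ. Qed.

End Isomorphism.

Section MalgCmonom.
Variables (K : fieldType) (I : choiceType).

Lemma malgUM (a b : {cmonom I}) :
  (<< a >> : {malg K[{cmonom I}]}) * (<< b >> : {malg K[{cmonom I}]})
  = (<< mulcm a b >> : {malg K[{cmonom I}]}).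
Proof. by rewrite malgM_def fgmulUU mulr1. Qed.

Lemma malg1E : (1 : {malg K[{cmonom I}]}) = << @onecm I >>.
Proof. reflexivity. Qed.

Lemma prodU_cmseq (s : seq I) :
  \prod_(x <- s) (<< ucm x >> : {malg K[{cmonom I}]}) = << cmseq s >>.
Proof.
elim: s => [|x s IH]; first by rewrite big_nil cmseq_nil malg1E.
by rewrite big_cons {}IH cmseq_cons malgUM.
Qed.

End MalgCmonom.

Section FertilityOfGrafting.
Variables (C : finType) (K : fieldType).
Implicit Types (g t x : dgraph C).

Definition fvar g (v : 'I_(tag g)) : C * nat := (gdeco g v, fert g v).

Lemma fmon_cmseq g : fmon g = cmseq (map (@fvar g) (index_enum 'I_(tag g))).
Proof. by rewrite /fmon /cmseq big_map. Qed.

Lemma fmon_graft t x (v : 'I_(tag x)) : nroots t = 1%N ->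
  fmon (graft_at t v) = mulcm (fmon t)
    (mulcm (ucm (gdeco x v, (fert x v).+1))
           (cmseq (map (@fvar x) (rem v (index_enum 'I_(tag x)))))).
Proof.
move=> root_t; rewrite {1}/fmon big_split_ord /=; congr mulcm.
  by apply: eq_bigr => i _; rewrite gdeco_graftl fert_graftl.
set E := index_enum _; have vE : v \in E by rewrite mem_index_enum.
transitivity (cmseq (map (fun j => (gdeco x j, ((v == j) + fert x j)%N)) E)).
  rewrite /cmseq big_map; apply: eq_bigr => j _.
  by rewrite gdeco_graftr fert_graftr root_t muln1.
rewrite (perm_cmseq (perm_map _ (perm_to_rem vE))) /= cmseq_cons eqxx add1n.
congr (mulcm _ (cmseq _)); apply/eq_in_map => j.
rewrite mem_rem_uniq ?index_enum_uniq // inE => /andP[vj _].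
by rewrite /fvar eq_sym (negbTE vj).
Qed.

Lemma deriv_cmseq (s : seq (C * nat)) :
  Defs.deriv (<< cmseq s >> : Npoly C K) =
  \sum_(y <- s) << mulcm (cmseq (rem y s)) (ucm (y.1, y.2.+1)) >>.
Proof.
rewrite /Defs.deriv linextU /dmon; under eq_bigr do rewrite scaler_nat.
pose F N (y : C * nat) : Npoly C K := << mulcm N (ucm (y.1, y.2.+1)) >>.
exact: (sum_divcm_cmseq F).
Qed.

Lemma sum_fmon_graft t x : nroots t = 1%N ->
  \sum_(v : 'I_(tag x)) (<< fmon (graft_at t v) >> : Npoly C K)
  = << fmon t >> * Defs.deriv << fmon x >>.
Proof.
move=> root_t; rewrite [fmon x]fmon_cmseq deriv_cmseq big_map mulr_sumr.
apply: eq_bigr => v _; rewrite malgUM (fmon_graft v root_t).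
by rewrite (cmseq_rem_map _ (mem_index_enum v)) [mulcm (cmseq _) _]mulcmC.
Qed.

End FertilityOfGrafting.

Section FertilityMap.
Variables (C : finType) (K : fieldType).

Definition PhiT (x : {malg K[Tree C]}) : Npoly C K := linext (fun t => << PhiTree t >>) x.
Definition PhiA0 (x : {malg K[Aroma C]}) : Npoly C K := linext (fun a => << PhiAroma a >>) x.

Lemma PhiT_tree_cls (g : dgraph C) : istree g -> PhiT (tree_cls K g) = << fmon g >>.
Proof.
move=> g_tree; rewrite /tree_cls; case: insubP => [t _ tE|]; last by rewrite istree_repr.
by rewrite /PhiT linextU /PhiTree tE fmon_repr.
Qed.

Lemma PhiA0_aroma_cls (g : dgraph C) : isaroma g -> PhiA0 (aroma_cls K g) = << fmon g >>.
Proof.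
move=> g_aroma; rewrite /aroma_cls; case: insubP => [a _ aE|]; last by rewrite isaroma_repr.
by rewrite /PhiA0 linextU /PhiAroma aE fmon_repr.
Qed.

Lemma PhiT_graft_tt (t1 t2 : Tree C) :
  PhiT (graft_tt K t1 t2) = << PhiTree t1 >> * Defs.deriv << PhiTree t2 >>.
Proof.
rewrite linear_map_sum; last exact: linear_linext.
rewrite -(sum_fmon_graft K _ (nroots_tree (valP t1))); apply: eq_bigr => v _.
by rewrite PhiT_tree_cls // istree_graft ?(valP t1) ?(valP t2).
Qed.

Lemma PhiA0_graft_ta (t : Tree C) (a : Aroma C) :
  PhiA0 (graft_ta K t a) = << PhiTree t >> * Defs.deriv << PhiAroma a >>.
Proof.
rewrite linear_map_sum; last exact: linear_linext.
rewrite -(sum_fmon_graft K _ (nroots_tree (valP t))); apply: eq_bigr => v _.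
by rewrite PhiA0_aroma_cls // isaroma_graft ?(valP t) ?(valP a).
Qed.

Lemma linear_PhiA : linear (@PhiA C K).
Proof. exact: linear_linext. Qed.

Definition PhiAm (m : {cmonom (Aroma C)}) : {cmonom (Mon C)} :=
  @cmmap (Aroma C) (Mon C) (@PhiAroma C) m.

Lemma PhiA_U (m : {cmonom (Aroma C)}) : PhiA (<< m >> : MA C K) = << PhiAm m >>.
Proof.
have [s ->] := cmseq_surj m.
rewrite /PhiA linextU /PhiAm cmmap_cmseq -prodU_cmseq big_map.
rewrite -(@big_cmseq _ _ 1 *%R (fun a => << ucm (PhiAroma a) >> : SM C K)).
by apply: eq_bigr => a _; rewrite Monoid.iteropE iter_mulr_1.
Qed.

Lemma PhiA_1 : PhiA (1 : MA C K) = 1.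
Proof. by rewrite malg1E PhiA_U /PhiAm cmmap_onecm malg1E. Qed.

(* Rewriting in a goal that contains [<< m1 >>] and [<< m2 >>] for distinct
   monomials makes ssreflect compare them by conversion, which unfolds the
   finite-map representation and does not terminate in practice; the basis
   computations below therefore isolate occurrences with [LHS], [X in _] and
   congruence lemmas. *)
Lemma PhiA_mul (a b : MA C K) : PhiA (a * b) = PhiA a * PhiA b.
Proof.
move: a b; apply: malg_bilinear_ext.
- exact: bilinear_comp_linear linear_PhiA (bilinear_mul _).
- exact: linear_comp_bilinear (bilinear_mul _) linear_PhiA linear_PhiA.
move=> m1 m2; rewrite malgUM [LHS]PhiA_U /PhiAm cmmap_mulcm -malgUM.
by congr (_ * _); rewrite PhiA_U.
Qed.

Lemma PhiA_liftA (y : {malg K[Aroma C]}) : PhiA (liftA y) = emb1 (PhiA0 y).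
Proof.
move: y; apply: malg_linear_ext.
- exact: linear_comp linear_PhiA (linear_linext _).
- exact: linear_comp (linear_linext _) (linear_linext _).
by move=> a; rewrite /liftA linextU PhiA_U /PhiAm cmmap_ucm /PhiA0 linextU /emb1 linextU.
Qed.

Lemma graft_tA_cmseq (t : Tree C) (s : seq (Aroma C)) :
  graft_tA t (<< cmseq s >> : MA C K) =
  \sum_(x <- s) << cmseq (rem x s) >> * liftA (graft_ta K t x).
Proof.
rewrite /graft_tA linextU; under eq_bigr do rewrite scaler_nat.
pose F N x : MA C K := << N >> * liftA (graft_ta K t x).
exact: (sum_divcm_cmseq F).
Qed.

Lemma dS_cmseq (k : Mon C) (r : seq (Mon C)) :
  dS k (<< cmseq r >> : SM C K) =
  \sum_(y <- r) << cmseq (rem y r) >> * emb1 (<< k >> * Defs.deriv << y >>).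
Proof.
rewrite /dS linextU; under eq_bigr do rewrite scaler_nat.
pose F N y : SM C K := << N >> * emb1 (<< k >> * Defs.deriv << y >>).
exact: (sum_divcm_cmseq F).
Qed.

Lemma PhiA_graft_tA (t : Tree C) (a : MA C K) :
  PhiA (graft_tA t a) = dS (PhiTree t) (PhiA a).
Proof.
move: a; apply: malg_linear_ext.
- exact: linear_comp linear_PhiA (linear_linext _).
- exact: linear_comp (linear_linext _) linear_PhiA.
move=> m; have [s ->] := cmseq_surj m.
rewrite graft_tA_cmseq linear_map_sum; last exact: linear_PhiA.
rewrite PhiA_U /PhiAm cmmap_cmseq dS_cmseq big_map big_seq [RHS]big_seq.
apply: eq_bigr => x xs; rewrite PhiA_mul PhiA_U /PhiAm cmmap_cmseq PhiA_liftA.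
by rewrite PhiA0_graft_ta (cmseq_rem_map _ xs).
Qed.

Lemma linear_PhiAT : linear (@PhiAT C K).
Proof. exact: linear_linext. Qed.

Lemma PhiAT_U (m : {cmonom (Aroma C)}) (t : Tree C) :
  PhiAT (<< (m, t) >> : AT C K) = << (PhiAm m, PhiTree t) >>.
Proof. by rewrite /PhiAT linextU /= PhiA_U /am_of linext2U. Qed.

Lemma PhiAT_at_of (a : MA C K) (x : {malg K[Tree C]}) :
  PhiAT (at_of a x) = am_of (PhiA a) (PhiT x).
Proof.
move: a x; apply: malg_bilinear_ext.
- exact: bilinear_comp_linear linear_PhiAT (bilinear_linext2 _).
- exact: linear_comp_bilinear (bilinear_linext2 _) linear_PhiA (linear_linext _).
by move=> m t; rewrite /at_of linext2U PhiAT_U PhiA_U /PhiT linextU /am_of linext2U.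
Qed.

Lemma rhdAM_PhiAT_U (m1 m2 : {cmonom (Aroma C)}) (t1 t2 : Tree C) :
  rhdAM (PhiAT (<< (m1, t1) >> : AT C K)) (PhiAT << (m2, t2) >>) =
  am_of (<< PhiAm m1 >> * dS (PhiTree t1) << PhiAm m2 >>) << PhiTree t2 >>
  + am_of << mulcm (PhiAm m1) (PhiAm m2) >> (<< PhiTree t1 >> * Defs.deriv << PhiTree t2 >>).
Proof. by rewrite [X in rhdAM X _]PhiAT_U [X in rhdAM _ X]PhiAT_U /rhdAM linext2U. Qed.

Lemma PhiAT_graftAT (X Y : AT C K) : PhiAT (graftAT X Y) = rhdAM (PhiAT X) (PhiAT Y).
Proof.
move: X Y; apply: malg_bilinear_ext.
- exact: bilinear_comp_linear linear_PhiAT (bilinear_linext2 _).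
- exact: linear_comp_bilinear (bilinear_linext2 _) linear_PhiAT linear_PhiAT.
move=> [m1 t1] [m2 t2]; rewrite rhdAM_PhiAT_U [RHS]addrC.
rewrite /graftAT linext2U /= (linear_mapD linear_PhiAT); congr (_ + _).
  by rewrite PhiAT_at_of PhiA_U PhiT_graft_tt /PhiAm cmmap_mulcm.
rewrite PhiAT_at_of PhiA_mul PhiA_graft_tA /PhiT linextU.
by apply: (congr2 (fun u v => am_of (u * dS _ v) _)); apply: PhiA_U.
Qed.

Lemma PhiAT_actA (a : MA C K) (X : AT C K) : PhiAT (actA a X) = actAM (PhiA a) (PhiAT X).
Proof.
move: a X; apply: malg_bilinear_ext.
- exact: bilinear_comp_linear linear_PhiAT (bilinear_linext2 _).
- exact: linear_comp_bilinear (bilinear_linext2 _) linear_PhiA linear_PhiAT.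
move=> m [m1 t]; rewrite /actA linext2U /= [LHS]PhiAT_U /PhiAm cmmap_mulcm.
by rewrite PhiAT_U PhiA_U /actAM linext2U.
Qed.

Lemma anchorAM_U (mu : {cmonom (Mon C)}) (k : Mon C) (y : SM C K) :
  anchorAM << (mu, k) >> y = << mu >> * dS k y.
Proof.
move: y; apply: malg_linear_ext.
- exact: (bilinear_linext2 _).2.
- exact: linear_comp ((bilinear_mul _).2 _) (linear_linext _).
by move=> nu; rewrite /anchorAM linext2U.
Qed.

Lemma PhiA_anchorAT (X : AT C K) (a : MA C K) :
  PhiA (anchorAT X a) = anchorAM (PhiAT X) (PhiA a).
Proof.
move: X a; apply: malg_bilinear_ext.
- exact: bilinear_comp_linear linear_PhiA (bilinear_linext2 _).
- exact: linear_comp_bilinear (bilinear_linext2 _) linear_PhiAT linear_PhiA.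
move=> [m1 t] m; rewrite /anchorAT linext2U /= PhiA_mul PhiA_graft_tA.
by rewrite PhiAT_U anchorAM_U; apply: (congr1 (fun u => u * _)); apply: PhiA_U.
Qed.

End FertilityMap.

Theorem theorem3p6 (K : fieldType) (C : finType) :
  (* Phi restricted to multiaromas is a unital algebra morphism *)
  (PhiA (1 : MA C K) = 1 /\
   (forall a b : MA C K, PhiA (a * b) = PhiA a * PhiA b) /\
   (forall (c : K) (a b : MA C K), PhiA (c *: a + b) = c *: PhiA a + PhiA b)) /\
  (* Phi : AT -> AM_{-1} is linear *)
  (forall (c : K) (X Y : AT C K), PhiAT (c *: X + Y) = c *: PhiAT X + PhiAT Y) /\
  (* Phi (X ~> Y) = Phi X |> Phi Y *)
  (forall X Y : AT C K, PhiAT (graftAT X Y) = rhdAM (PhiAT X) (PhiAT Y)) /\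
  (* Phi (a X) = Phi a (.) Phi X *)
  (forall (a : MA C K) (X : AT C K), PhiAT (actA a X) = actAM (PhiA a) (PhiAT X)) /\
  (* Phi (rho(X) a) = rho(Phi X)(Phi a) *)
  (forall (X : AT C K) (a : MA C K),
      PhiA (anchorAT X a) = anchorAM (PhiAT X) (PhiA a)).
Proof.
split; first by split; [exact: PhiA_1 | split; [exact: PhiA_mul | exact: linear_PhiA]].
split; first exact: linear_PhiAT.
split; first exact: PhiAT_graftAT.
split; first exact: PhiAT_actA.
exact: PhiA_anchorAT.
Qed.
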